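(* Let $\alpha>1$. Let $N\ge1$, $0\le N_1<N$, and let $p=(p_1,\dots,p_N)$ be a probability vector with $p_1=\dots=p_{N_1}=0$ and $p_k>0$ for $N_1<k\le N$. Let $c_1,\dots,c_N$ be fixed reals, not all zero, with $0\le c_k\le1$ for $k\le N_1$, $|c_k|\le1$ for $k>N_1$, and $\sum_{k=1}^Nc_k=0$. For $0<\varepsilon\le\min_{k>N_1}p_k$ define $p(\varepsilon)$ by $p_k(\varepsilon)=c_k\varepsilon$ for $k\le N_1$ and $p_k(\varepsilon)=p_k+c_k\varepsilon$ for $k>N_1$. Write $S=\sum_{k=N_1+1}^Np_k^\alpha$ and $T=\sum_{k=N_1+1}^Nc_kp_k^{\alpha-1}$. Then, as $\varepsilon\to0+$: (i) if $T\ne0$, then $\mathcal H_\alpha(p)-\mathcal H_\alpha(p(\varepsilon))\sim\frac{\alpha\varepsilon}{\alpha-1}\,T\,S^{-1}$; (ii) if $T=0$, $1<\alpha<2$, $N_1\ge1$ and $c_k\ne0$ for some $k\le N_1$, then $\mathcal H_\alpha(p)-\mathcal H_\alpha(p(\varepsilon))\sim\frac{\varepsilon^\alpha}{\alpha-1}\Big(\sum_{k=1}^{N_1}c_k^\alpha\Big)S^{-1}$; (iii) if $T=0$, $1<\alpha<2$ and $c_k=0$ for all $k\le N_1$, then $\mathcal H_\alpha(p)-\mathcal H_\alpha(p(\varepsilon))\sim\frac{\alpha\varepsilon^2}{2}\Big(\sum_{k=N_1+1}^Nc_k^2p_k^{\alpha-2}\Big)S^{-1}$; (iv) if $T=0$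 and $\alpha=2$, then $\mathcal H_2(p)-\mathcal H_2(p(\varepsilon))\sim\varepsilon^2\Big(\sum_{k=1}^Nc_k^2\Big)\Big(\sum_{k=N_1+1}^Np_k^2\Big)^{-1}$; (v) if $T=0$ and $\alpha>2$, then $\mathcal H_\alpha(p)-\mathcal H_\alpha(p(\varepsilon))\sim\frac{\alpha\varepsilon^2}{2}\Big(\sum_{k=N_1+1}^Nc_k^2p_k^{\alpha-2}\Big)S^{-1}$.
   Context: $\mathcal H_\alpha(p)=\frac1{1-\alpha}\log\sum_kp_k^\alpha$ (Rényi entropy), with $0^\alpha=0$; logarithms are natural. $a(\varepsilon)\sim b(\varepsilon)$ means $a(\varepsilon)/b(\varepsilon)\to1$. *)

From Stdlib Require Import Reals Lra.
From Coquelicot Require Import Coquelicot.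
Open Scope R_scope.

(* real power with the convention 0^a = 0 (only applied to nonnegative bases) *)
Definition rpow (x a : R) : R := if Rle_dec x 0 then 0 else Rpower x a.

Definition renyi (alpha : R) (N : nat) (p : nat -> R) : R :=
  / (1 - alpha) * ln (sum_n_m (fun k => rpow (p k) alpha) 1 N).

Definition pert (N1 : nat) (p c : nat -> R) (eps : R) : nat -> R :=
  fun k => if (k <=? N1)%nat then c k * eps else p k + c k * eps.

Definition asym_equiv (a b : R -> R) : Prop :=
  filterlim (fun e => a e / b e) (at_right 0) (locally 1).

From Stdlib Require Import Reals Lra Lia Classical.
From Coquelicot Require Import Coquelicot.
Open Scope R_scope.

(* Writing F(eps) = sum_k p_k(eps)^alpha and S = F(0), one has
   H_alpha(p) - H_alpha(p(eps)) = (ln F(eps) - ln S) / (alpha - 1).  The proof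
   rests on the expansion, valid for every eps > 0,
     F(eps) - S = C eps^alpha + alpha T eps + alpha (alpha-1)/2 Q eps^2 + eps^2 R(eps)
   with C = sum_{k <= N1} c_k^alpha, Q = sum_{k > N1} c_k^2 p_k^(alpha-2) and
   R(eps) -> 0: the head coordinates are homogeneous of degree alpha in eps,
   the tail ones are expanded by the second-order Taylor formula with
   little-o remainder (proved from the mean value theorem).  Combined with
   ln(1+u) ~ u, a dominant term m(eps) of F(eps) - S with (F - S)/m -> K <> 0
   yields H_alpha(p) - H_alpha(p(eps)) ~ m K / ((alpha-1) S). *)

Definition lim0 (f : R -> R) (l : R) : Prop := filterlim f (at_right 0) (locally l).

Lemma at_right0_intro (P : R -> Prop) (d : R) :
  0 < d -> (forall e, 0 < e < d -> P e) -> at_right 0 P.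
Proof.
  intros Hd HP. exists (mkposreal d Hd). intros e He Hpos. apply HP.
  change (Rabs (e - 0) < d) in He. rewrite Rminus_0_r in He.
  apply Rabs_def2 in He. lra.
Qed.

Lemma at_right0_pos : at_right 0 (fun e => 0 < e).
Proof. exact (at_right0_intro _ 1 Rlt_0_1 (fun e He => proj1 He)). Qed.

Lemma lim0_intro (f : R -> R) (l : R) :
  (forall eta, 0 < eta -> exists d, 0 < d /\ forall e, 0 < e < d -> Rabs (f e - l) < eta) ->
  lim0 f l.
Proof.
  intros H. apply filterlim_locally. intros eta.
  destruct (H eta (cond_pos eta)) as [d [Hd Hf]]. exact (at_right0_intro _ d Hd Hf).
Qed.

Lemma lim0_ext (f g : R -> R) (l : R) :
  (forall e, 0 < e -> f e = g e) -> lim0 f l -> lim0 g l.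
Proof. intros H. apply filterlim_ext_loc. exact (filter_imp _ _ H at_right0_pos). Qed.

Lemma lim0_const (a : R) : lim0 (fun _ => a) a.
Proof. apply filterlim_const. Qed.

Lemma lim0_id : lim0 (fun e => e) 0.
Proof.
  apply lim0_intro. intros eta Heta. exists eta; split; [exact Heta |]. intros e He.
  rewrite Rminus_0_r, Rabs_right; lra.
Qed.

Lemma lim0_plus (f g : R -> R) (a b : R) :
  lim0 f a -> lim0 g b -> lim0 (fun e => f e + g e) (a + b).
Proof. intros Hf Hg. exact (filterlim_comp_2 f g Rplus Hf Hg (filterlim_plus a b)). Qed.

Lemma lim0_mult (f g : R -> R) (a b : R) :
  lim0 f a -> lim0 g b -> lim0 (fun e => f e * g e) (a * b).
Proof. intros Hf Hg. exact (filterlim_comp_2 f g Rmult Hf Hg (filterlim_mult a b)). Qed.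

Lemma lim0_sqr : lim0 (fun e => e ^ 2) 0.
Proof.
  apply (lim0_ext (fun e => e * e)); [intros; ring |].
  replace 0 with (0 * 0) by ring. apply lim0_mult; apply lim0_id.
Qed.

Lemma lim0_sum (f : nat -> R -> R) (l : nat -> R) (n m : nat) :
  (forall k, (n <= k <= m)%nat -> lim0 (f k) (l k)) ->
  lim0 (fun e => sum_n_m (fun k => f k e) n m) (sum_n_m l n m).
Proof.
  induction m as [|m IHm]; intros H.
  - destruct n as [|n].
    + rewrite sum_n_n. apply (lim0_ext (f 0%nat)); [intros; now rewrite sum_n_n |].
      apply H; lia.
    + rewrite sum_n_m_zero by lia. apply (lim0_ext (fun _ => 0)); [|apply lim0_const].
      intros; now rewrite sum_n_m_zero by lia.
  - destruct (Compare_dec.le_lt_dec n (S m)) as [Hn|Hn].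
    + rewrite sum_n_Sm by lia.
      apply (lim0_ext (fun e => sum_n_m (fun k => f k e) n m + f (S m) e)).
      { intros; now rewrite sum_n_Sm by lia. }
      apply lim0_plus; [apply IHm; intros; apply H |apply H]; lia.
    + rewrite sum_n_m_zero by lia. apply (lim0_ext (fun _ => 0)); [|apply lim0_const].
      intros; now rewrite sum_n_m_zero by lia.
Qed.

Lemma rpow_pos (x a : R) : 0 < x -> rpow x a = Rpower x a.
Proof. intros H; unfold rpow; destruct (Rle_dec x 0); [lra | reflexivity]. Qed.

Lemma rpow_nonpos (x a : R) : x <= 0 -> rpow x a = 0.
Proof. intros H; unfold rpow; destruct (Rle_dec x 0); [reflexivity | lra]. Qed.

Lemma Rpower_pos (x a : R) : 0 < Rpower x a.
Proof. apply exp_pos. Qed.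

Lemma rpow_nonneg (x a : R) : 0 <= rpow x a.
Proof. unfold rpow; destruct (Rle_dec x 0); [lra | left; apply Rpower_pos]. Qed.

Lemma Rpower_minus (x a b : R) : Rpower x (a - b) = Rpower x a / Rpower x b.
Proof. unfold Rminus, Rdiv. now rewrite Rpower_plus, Rpower_Ropp. Qed.

Lemma Rpower_two (x : R) : 0 < x -> Rpower x 2 = x ^ 2.
Proof. intros Hx. replace 2 with (INR 2) by (simpl; ring). now apply Rpower_pow. Qed.

Lemma rpow_scale (x e a : R) : 0 <= x -> 0 < e -> rpow (x * e) a = rpow e a * rpow x a.
Proof.
  intros Hx He. destruct (Req_dec x 0) as [E|E].
  - subst. rewrite Rmult_0_l, !rpow_nonpos by lra. ring.
  - rewrite !rpow_pos by nra. rewrite Rpower_mult_distr by lra. f_equal; ring.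
Qed.

Lemma lim0_rpow (b : R) : 0 < b -> lim0 (fun e => rpow e b) 0.
Proof.
  intros Hb. apply lim0_intro. intros eta Heta. exists (Rpower eta (/ b)).
  split; [apply Rpower_pos |]. intros e He.
  rewrite rpow_pos, Rminus_0_r, Rabs_right by (try left; try apply Rpower_pos; lra).
  replace eta with (Rpower (Rpower eta (/ b)) b).
  - apply Rlt_Rpower_l; lra.
  - rewrite Rpower_mult, Rinv_l by lra. now apply Rpower_1.
Qed.

(* Second-order Taylor formula with little-o remainder, from the mean value theorem. *)

Lemma between_dist (a b x : R) :
  Rmin a b <= x <= Rmax a b -> Rabs (x - a) <= Rabs (b - a).
Proof.
  unfold Rmin, Rmax, Rabs; destruct (Rle_dec a b);
    repeat destruct Rcase_abs; lra.
Qed.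

(* If r and r' vanish at x0 and |r''| <= M near x0, then |r(x0 + t)| <= M t^2:
   two mean value steps give r(x0 + t) = r''(u) (s - x0) t with |s - x0| <= |t|. *)
Lemma second_order_bound (r r1 r2 : R -> R) (x0 d M : R) :
  (forall x, Rabs (x - x0) < d -> is_derive r x (r1 x)) ->
  (forall x, Rabs (x - x0) < d -> is_derive r1 x (r2 x)) ->
  (forall x, Rabs (x - x0) < d -> Rabs (r2 x) <= M) ->
  r x0 = 0 -> r1 x0 = 0 ->
  forall t, Rabs t < d -> Rabs (r (x0 + t)) <= M * t ^ 2.
Proof.
  intros Dr Dr1 HM Hr0 Hr10 t Ht.
  assert (Hnear : forall y x, Rabs (y - x0) <= Rabs t ->
                    Rmin x0 y <= x <= Rmax x0 y -> Rabs (x - x0) < d).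
  { intros y x Hy Hx. pose proof (between_dist x0 y x Hx). lra. }
  assert (Ht0 : Rabs (x0 + t - x0) <= Rabs t) by (replace (x0 + t - x0) with t by ring; lra).
  destruct (MVT_gen r x0 (x0 + t) r1) as [s [Hs Es]].
  - intros x Hx. apply Dr, (Hnear (x0 + t)); [exact Ht0 | lra].
  - intros x Hx. apply derivable_continuous_pt. exists (r1 x).
    apply is_derive_Reals, Dr, (Hnear (x0 + t)); [exact Ht0 | exact Hx].
  assert (Hs0 : Rabs (s - x0) <= Rabs t) by (pose proof (between_dist _ _ _ Hs); lra).
  destruct (MVT_gen r1 x0 s r2) as [u [Hu Eu]].
  - intros x Hx. apply Dr1, (Hnear s); [exact Hs0 | lra].
  - intros x Hx. apply derivable_continuous_pt. exists (r2 x).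
    apply is_derive_Reals, Dr1, (Hnear s); [exact Hs0 | exact Hx].
  assert (Hr2u : Rabs (r2 u) <= M) by (apply HM, (Hnear s); [exact Hs0 | exact Hu]).
  assert (Erem : r (x0 + t) = r2 u * (s - x0) * t).
  { replace (r (x0 + t)) with (r (x0 + t) - r x0) by (rewrite Hr0; ring).
    rewrite Es, <- Eu, Hr10. ring. }
  rewrite Erem, !Rabs_mult.
  replace (t ^ 2) with (Rabs t * Rabs t) by (rewrite <- Rabs_mult, Rabs_pos_eq; [ring | nra]).
  rewrite <- Rmult_assoc. apply Rmult_le_compat_r; [apply Rabs_pos |].
  apply Rmult_le_compat; try apply Rabs_pos; lra.
Qed.

Lemma taylor2_little_o (f f1 f2 : R -> R) (x0 d : R) :
  0 < d ->
  (forall x, Rabs (x - x0) < d -> is_derive f x (f1 x)) ->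
  (forall x, Rabs (x - x0) < d -> is_derive f1 x (f2 x)) ->
  continuous f2 x0 ->
  forall eta, 0 < eta -> exists delta, 0 < delta /\ forall t, Rabs t < delta ->
    Rabs (f (x0 + t) - f x0 - f1 x0 * t - f2 x0 / 2 * t ^ 2) <= eta * t ^ 2.
Proof.
  intros Hd Df Df1 Cf2 eta Heta.
  destruct (proj1 (filterlim_locally _ _) Cf2 (mkposreal eta Heta)) as [d2 Hd2].
  set (delta := Rmin d d2).
  assert (Hdelta : forall x, Rabs (x - x0) < delta -> Rabs (x - x0) < d /\ Rabs (x - x0) < d2).
  { intros x Hx. split; eapply Rlt_le_trans; [exact Hx | apply Rmin_l | exact Hx | apply Rmin_r]. }
  exists delta; split; [apply Rmin_pos; [lra | apply cond_pos] |].
  intros t Ht.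
  set (r := fun x => f x - f x0 - f1 x0 * (x - x0) - f2 x0 / 2 * (x - x0) ^ 2).
  set (r1 := fun x => f1 x - f1 x0 - f2 x0 * (x - x0)).
  replace (f (x0 + t) - f x0 - f1 x0 * t - f2 x0 / 2 * t ^ 2) with (r (x0 + t))
    by (unfold r; ring).
  apply (second_order_bound r r1 (fun x => f2 x - f2 x0) x0 delta); [| | | unfold r; ring | unfold r1; ring | exact Ht].
  - intros x Hx. unfold r, r1. auto_derive.
    + eexists; apply Df, Hdelta, Hx.
    + rewrite (is_derive_unique (fun y : R => f y) x (f1 x)) by apply Df, Hdelta, Hx. field.
  - intros x Hx. unfold r1. auto_derive.
    + eexists; apply Df1, Hdelta, Hx.
    + rewrite (is_derive_unique (fun y : R => f1 y) x (f2 x)) by apply Df1, Hdelta, Hx. ring.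
  - intros x Hx. left. exact (Hd2 x (proj2 (Hdelta x Hx))).
Qed.

Lemma Rpower_taylor2 (a x eta : R) : 0 < x -> 0 < eta ->
  exists delta, 0 < delta /\ forall t, Rabs t < delta -> 0 < x + t /\
    Rabs (Rpower (x + t) a - Rpower x a - a * Rpower x (a - 1) * t
          - a * (a - 1) / 2 * Rpower x (a - 2) * t ^ 2) <= eta * t ^ 2.
Proof.
  intros Hx Heta.
  set (f1 := fun y => a * Rpower y (a - 1)).
  set (f2 := fun y => a * ((a - 1) * Rpower y (a - 2))).
  assert (Df1 : forall y, 0 < y -> derivable_pt_lim f1 y (f2 y)).
  { intros y Hy. unfold f1, f2. replace (a - 2) with (a - 1 - 1) by ring.
    apply (derivable_pt_lim_scal (fun z => Rpower z (a - 1))), derivable_pt_lim_power, Hy. }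
  destruct (taylor2_little_o (fun y => Rpower y a) f1 f2 x x Hx) with (eta := eta)
    as [delta [Hdelta Htaylor]]; [| | | exact Heta |].
  - intros y Hy. apply is_derive_Reals, derivable_pt_lim_power.
    apply Rabs_def2 in Hy. lra.
  - intros y Hy. apply is_derive_Reals, Df1. apply Rabs_def2 in Hy. lra.
  - apply continuity_pt_filterlim, derivable_continuous_pt.
    exists (a * ((a - 1) * ((a - 2) * Rpower x (a - 2 - 1)))).
    apply (derivable_pt_lim_scal (fun z => (a - 1) * Rpower z (a - 2))),
      (derivable_pt_lim_scal (fun z => Rpower z (a - 2))), derivable_pt_lim_power, Hx.
  - exists (Rmin delta x). split; [apply Rmin_pos; lra |]. intros t Ht.
    assert (Ht1 : Rabs t < delta) by (eapply Rlt_le_trans; [exact Ht | apply Rmin_l]).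
    assert (Ht2 : Rabs t < x) by (eapply Rlt_le_trans; [exact Ht | apply Rmin_r]).
    split; [apply Rabs_def2 in Ht2; lra |].
    replace (a * (a - 1) / 2 * Rpower x (a - 2)) with (f2 x / 2) by (unfold f2; field).
    exact (Htaylor t Ht1).
Qed.

Definition taylor_rem (a x c e : R) : R :=
  (rpow (x + c * e) a - rpow x a - a * (c * rpow x (a - 1)) * e
   - a * (a - 1) / 2 * (c ^ 2 * rpow x (a - 2)) * e ^ 2) / e ^ 2.

Lemma taylor_rem_lim (a x c : R) : 0 < x -> lim0 (taylor_rem a x c) 0.
Proof.
  intros Hx. apply lim0_intro. intros eta Heta.
  (* a remainder at most eta/(c^2+1) (c e)^2 gives |taylor_rem| < eta *)
  assert (Hc2 : 0 <= c ^ 2) by apply pow2_ge_0.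
  destruct (Rpower_taylor2 a x (eta / (c ^ 2 + 1)) Hx) as [delta [Hdelta Htaylor]];
    [apply Rdiv_lt_0_compat; lra |].
  pose proof (Rabs_pos c) as Hc.
  exists (delta / (Rabs c + 1)). split; [apply Rdiv_lt_0_compat; lra |].
  intros e [He0 He].
  assert (Hce : Rabs (c * e) < delta).
  { rewrite Rabs_mult, (Rabs_pos_eq e) by lra.
    apply (Rmult_lt_compat_r (Rabs c + 1)) in He; [|lra].
    unfold Rdiv in He. rewrite Rmult_assoc, Rinv_l, Rmult_1_r in He by lra. nra. }
  destruct (Htaylor (c * e) Hce) as [Hpos Hbound].
  assert (Erem : taylor_rem a x c e
      = (Rpower (x + c * e) a - Rpower x a - a * Rpower x (a - 1) * (c * e)
         - a * (a - 1) / 2 * Rpower x (a - 2) * (c * e) ^ 2) / e ^ 2).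
  { unfold taylor_rem. rewrite !rpow_pos by lra. field. lra. }
  rewrite Erem, Rminus_0_r. unfold Rdiv. rewrite Rabs_mult, Rabs_inv.
  rewrite (Rabs_pos_eq (e ^ 2)) by (apply pow_le; lra).
  apply (Rmult_le_compat_r (/ e ^ 2)) in Hbound; [| left; apply Rinv_0_lt_compat, pow_lt; lra].
  eapply Rle_lt_trans; [exact Hbound |].
  replace (eta / (c ^ 2 + 1) * (c * e) ^ 2 * / e ^ 2) with (eta * (c ^ 2 / (c ^ 2 + 1)))
    by (field; lra).
  assert (c ^ 2 / (c ^ 2 + 1) < 1).
  { apply Rmult_lt_reg_r with (c ^ 2 + 1); [lra |].
    unfold Rdiv. rewrite Rmult_assoc, Rinv_l by lra. lra. }
  nra.
Qed.

Lemma sum_split (f : nat -> R) (N1 N : nat) : (N1 <= N)%nat ->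
  sum_n_m f 1 N = sum_n_m f 1 N1 + sum_n_m f (N1 + 1) N.
Proof.
  intros H. replace (N1 + 1)%nat with (S N1) by lia.
  apply (sum_n_m_Chasles f 1 N1 N); lia.
Qed.

Lemma sum_ext (f g : nat -> R) (n m : nat) :
  (forall k, (n <= k <= m)%nat -> f k = g k) -> sum_n_m f n m = sum_n_m g n m.
Proof. apply sum_n_m_ext_loc. Qed.

Lemma sum_plus (f g : nat -> R) (n m : nat) :
  sum_n_m (fun k => f k + g k) n m = sum_n_m f n m + sum_n_m g n m.
Proof. exact (sum_n_m_plus f g n m). Qed.

Lemma sum_scal (x : R) (f : nat -> R) (n m : nat) :
  sum_n_m (fun k => x * f k) n m = x * sum_n_m f n m.
Proof. exact (sum_n_m_mult_l x f n m). Qed.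

Lemma sum_zero (f : nat -> R) (n m : nat) :
  (forall k, (n <= k <= m)%nat -> f k = 0) -> sum_n_m f n m = 0.
Proof.
  intros H. rewrite (sum_n_m_ext_loc f (fun _ => zero)) by exact H.
  exact (@sum_n_m_const_zero R_AbelianMonoid n m).
Qed.

Lemma sum_nonneg (f : nat -> R) (n m : nat) :
  (forall k, (n <= k <= m)%nat -> 0 <= f k) -> 0 <= sum_n_m f n m.
Proof.
  induction m as [|m IHm]; intros H.
  - destruct n as [|n]; [rewrite sum_n_n; apply H; lia |].
    rewrite sum_n_m_zero by lia. apply Rle_refl.
  - destruct (Compare_dec.le_lt_dec n (S m)) as [Hn|Hn].
    + rewrite sum_n_Sm by lia.
      apply Rplus_le_le_0_compat; [apply IHm; intros; apply H | apply H]; lia.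
    + rewrite sum_n_m_zero by lia. apply Rle_refl.
Qed.

Lemma sum_pos (f : nat -> R) (n m : nat) :
  (forall k, (n <= k <= m)%nat -> 0 <= f k) ->
  (exists k, (n <= k <= m)%nat /\ 0 < f k) -> 0 < sum_n_m f n m.
Proof.
  intros H [k [Hk Hfk]].
  rewrite (sum_n_m_Chasles f n k m) by lia. change (0 < sum_n_m f n k + sum_n_m f (S k) m).
  assert (0 <= sum_n_m f (S k) m) by (apply sum_nonneg; intros; apply H; lia).
  destruct (Nat.eq_dec n k) as [E|E].
  - subst. rewrite sum_n_n. lra.
  - destruct k as [|k]; [lia |]. rewrite sum_n_Sm by lia.
    change (0 < sum_n_m f n k + f (S k) + sum_n_m f (S (S k)) m).
    assert (0 <= sum_n_m f n k) by (apply sum_nonneg; intros; apply H; lia). lra.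
Qed.

(* ln(1 + u) = q(u) u with q continuous at 0 and q(0) = 1 *)
Definition ln1p_quot (u : R) : R := if Req_EM_T u 0 then 1 else ln (1 + u) / u.

Lemma ln1p_quot_spec (u : R) : ln (1 + u) = ln1p_quot u * u.
Proof.
  unfold ln1p_quot. destruct (Req_EM_T u 0) as [->|Hu].
  - rewrite Rplus_0_r, ln_1. ring.
  - field. exact Hu.
Qed.

Lemma ln1p_quot_cont : filterlim ln1p_quot (locally 0) (locally 1).
Proof.
  apply filterlim_locally. intros eta.
  destruct (derivable_pt_lim_ln 1 Rlt_0_1 eta (cond_pos eta)) as [d Hd].
  exists d. intros u Hu. change (Rabs (ln1p_quot u - 1) < eta).
  unfold ln1p_quot. destruct (Req_EM_T u 0) as [->|Hu0].
  - rewrite Rminus_eq_0, Rabs_R0. apply cond_pos.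
  - change (Rabs (u - 0) < d) in Hu. rewrite Rminus_0_r in Hu.
    specialize (Hd u Hu0 Hu). now rewrite ln_1, Rminus_0_r, Rinv_1 in Hd.
Qed.

Lemma ln_quotient_lim (S0 K : R) (F m : R -> R) :
  0 < S0 -> lim0 m 0 -> (forall e, 0 < e -> m e <> 0) ->
  lim0 (fun e => (F e - S0) / m e) K ->
  lim0 (fun e => (ln (F e) - ln S0) / m e) (K / S0).
Proof.
  intros HS Hm Hm0 HK.
  (* u = (F - S0)/S0, written as a product of convergent factors *)
  set (u := fun e => (F e - S0) / m e * m e * / S0).
  assert (Hu : lim0 u 0).
  { replace 0 with (K * 0 * / S0) by ring.
    apply lim0_mult; [apply lim0_mult |]; auto using lim0_const. }
  assert (Hsmall : at_right 0 (fun e => 0 < e /\ Rabs (u e - 0) < 1 / 2)).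
  { apply filter_and; [exact at_right0_pos |].
    assert (Hhalf : 0 < 1 / 2) by lra.
    exact (proj1 (filterlim_locally _ _) Hu (mkposreal _ Hhalf)). }
  (* eventually F = S0 (1 + u) > 0, hence ln F - ln S0 = q(u) u *)
  apply (filterlim_ext_loc (fun e => ln1p_quot (u e) * ((F e - S0) / m e) * / S0)).
  - apply (filter_imp _ _) with (2 := Hsmall). intros e [He Hue].
    rewrite Rminus_0_r in Hue. apply Rabs_def2 in Hue.
    assert (Hme := Hm0 e He).
    assert (EF : F e = S0 * (1 + u e)) by (unfold u; field; split; lra).
    rewrite EF, ln_mult, ln1p_quot_spec by lra. unfold u. field. split; lra.
  - replace (K / S0) with (1 * K * / S0) by (unfold Rdiv; ring).
    apply lim0_mult; [apply lim0_mult |]; auto using lim0_const.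
    exact (filterlim_comp _ _ _ u ln1p_quot _ _ _ Hu ln1p_quot_cont).
Qed.

Section Perturbation.

Variables (alpha : R) (N N1 : nat) (p c : nat -> R).
Hypothesis Ha : 1 < alpha.
Hypothesis HN1N : (N1 < N)%nat.
Hypothesis Hp_head : forall k, (1 <= k <= N1)%nat -> p k = 0.
Hypothesis Hp_tail : forall k, (N1 < k <= N)%nat -> 0 < p k.
Hypothesis Hc_head : forall k, (1 <= k <= N1)%nat -> 0 <= c k.

Definition Spow : R := sum_n_m (fun k => rpow (p k) alpha) (N1 + 1) N.
Definition Tlin : R := sum_n_m (fun k => c k * rpow (p k) (alpha - 1)) (N1 + 1) N.
Definition Qquad : R := sum_n_m (fun k => c k ^ 2 * rpow (p k) (alpha - 2)) (N1 + 1) N.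
Definition Chead : R := sum_n_m (fun k => rpow (c k) alpha) 1 N1.
Definition Fpert (e : R) : R := sum_n_m (fun k => rpow (pert N1 p c e k) alpha) 1 N.
Definition Rem (e : R) : R := sum_n_m (fun k => taylor_rem alpha (p k) (c k) e) (N1 + 1) N.
Definition renyi_gap (e : R) : R := renyi alpha N p - renyi alpha N (pert N1 p c e).

(* the zero coordinates of p do not contribute to its power sum *)
Lemma renyi_p : renyi alpha N p = / (1 - alpha) * ln Spow.
Proof.
  unfold renyi, Spow. rewrite (sum_split _ N1 N) by lia.
  rewrite (sum_zero _ 1 N1); [now rewrite Rplus_0_l |].
  intros k Hk. rewrite Hp_head by lia. apply rpow_nonpos; lra.
Qed.

(* the last coordinate is positive *)
Lemma Spow_pos : 0 < Spow.
Proof.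
  apply sum_pos; [intros; apply rpow_nonneg |].
  exists N. split; [lia |]. rewrite rpow_pos by (apply Hp_tail; lia). apply Rpower_pos.
Qed.

Lemma Fpert_expansion (e : R) : 0 < e ->
  Fpert e - Spow = Chead * rpow e alpha + alpha * Tlin * e
                   + alpha * (alpha - 1) / 2 * Qquad * e ^ 2 + e ^ 2 * Rem e.
Proof.
  intros He. unfold Fpert, Spow, Tlin, Qquad, Chead, Rem.
  rewrite (sum_split _ N1 N) by lia.
  (* head coordinates: (c_k eps)^alpha = eps^alpha c_k^alpha *)
  rewrite (sum_ext _ (fun k => rpow e alpha * rpow (c k) alpha) 1 N1).
  2:{ intros k Hk. unfold pert. replace (k <=? N1)%nat with true by (symmetry; apply Nat.leb_le; lia).
      apply rpow_scale; [apply Hc_head; lia | exact He]. }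
  rewrite (sum_ext _ (fun k => rpow (p k) alpha + ((e * alpha) * (c k * rpow (p k) (alpha - 1))
      + ((e ^ 2 * (alpha * (alpha - 1) / 2)) * (c k ^ 2 * rpow (p k) (alpha - 2))
      + e ^ 2 * taylor_rem alpha (p k) (c k) e))) (N1 + 1) N).
  2:{ intros k Hk. unfold pert. replace (k <=? N1)%nat with false by (symmetry; apply Nat.leb_gt; lia).
      cbv iota. unfold taylor_rem. field. lra. }
  rewrite !sum_plus, !sum_scal. ring.
Qed.

Lemma Rem_lim : lim0 Rem 0.
Proof.
  unfold Rem. rewrite <- (sum_zero (fun _ => 0) (N1 + 1) N) by reflexivity.
  apply lim0_sum. intros k Hk. apply taylor_rem_lim, Hp_tail. lia.
Qed.

Lemma gap_equiv (m : R -> R) (K : R) (b : R -> R) :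
  K <> 0 -> lim0 m 0 -> (forall e, 0 < e -> m e <> 0) ->
  (forall e, 0 < e -> b e = m e * K / ((alpha - 1) * Spow)) ->
  lim0 (fun e => (Fpert e - Spow) / m e) K -> asym_equiv renyi_gap b.
Proof.
  intros HK Hm Hm0 Hb Hquot. pose proof Spow_pos.
  apply (lim0_ext (fun e => (ln (Fpert e) - ln Spow) / m e * (Spow / K))).
  - intros e He. unfold renyi_gap. rewrite renyi_p, Hb by exact He.
    unfold renyi. fold (Fpert e). field. repeat split; try lra. now apply Hm0.
  - replace 1 with (K / Spow * (Spow / K)) by (field; split; lra).
    apply lim0_mult; [apply ln_quotient_lim; auto | apply lim0_const].
Qed.

Lemma Chead_pos : (exists k, (1 <= k <= N1)%nat /\ c k <> 0) -> 0 < Chead.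
Proof.
  intros [k [Hk Hck]]. apply sum_pos; [intros; apply rpow_nonneg |].
  exists k. split; [exact Hk |]. pose proof (Hc_head k Hk).
  rewrite rpow_pos by lra. apply Rpower_pos.
Qed.

Lemma Qquad_pos : (exists k, (N1 < k <= N)%nat /\ c k <> 0) -> 0 < Qquad.
Proof.
  intros [k [Hk Hck]]. apply sum_pos.
  - intros j Hj. apply Rmult_le_pos; [apply pow2_ge_0 | apply rpow_nonneg].
  - exists k. split; [lia |]. apply Rmult_lt_0_compat; [now apply pow2_gt_0 |].
    rewrite rpow_pos by (apply Hp_tail; lia). apply Rpower_pos.
Qed.

(* mass conservation: a nonzero perturbation must move some positive coordinate,
   since on the zero coordinates it is nonnegative *)
Lemma tail_perturbed :
  (exists k, (1 <= k <= N)%nat /\ c k <> 0) -> sum_n_m c 1 N = 0 ->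
  exists k, (N1 < k <= N)%nat /\ c k <> 0.
Proof.
  intros [k [Hk Hck]] Hsum. apply NNPP. intros Htail.
  assert (Hz : sum_n_m c (N1 + 1) N = 0).
  { apply sum_zero. intros j Hj. apply NNPP. intros Hcj. apply Htail. exists j. split; [lia | exact Hcj]. }
  destruct (Compare_dec.le_lt_dec k N1) as [HkN1|HkN1].
  - assert (0 < sum_n_m c 1 N1).
    { apply sum_pos; [exact Hc_head |]. exists k. split; [lia |].
      pose proof (Hc_head k ltac:(lia)). lra. }
    rewrite (sum_split _ N1 N), Hz in Hsum by lia. lra.
  - apply Htail. exists k. split; [lia | exact Hck].
Qed.

Lemma equiv_linear :
  Tlin <> 0 -> asym_equiv renyi_gap (fun eps => alpha * eps / (alpha - 1) * Tlin / Spow).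
Proof.
  intros HT. pose proof Spow_pos.
  apply (gap_equiv (fun e => e) (alpha * Tlin)).
  - apply Rmult_integral_contrapositive; split; lra.
  - exact lim0_id.
  - intros e He; lra.
  - intros e He. field. split; lra.
  - apply (lim0_ext (fun e => Chead * rpow e (alpha - 1) + alpha * Tlin
                          + alpha * (alpha - 1) / 2 * Qquad * e + e * Rem e)).
    + intros e He. rewrite Fpert_expansion, !rpow_pos, Rpower_minus, Rpower_1 by lra.
      field. lra.
    + assert (Hlim : lim0 (fun e => Chead * rpow e (alpha - 1) + alpha * Tlin
                          + alpha * (alpha - 1) / 2 * Qquad * e + e * Rem e)
          (Chead * 0 + alpha * Tlin + alpha * (alpha - 1) / 2 * Qquad * 0 + 0 * 0)).
      { repeat apply lim0_plus.
        - apply lim0_mult; [apply lim0_const | apply lim0_rpow; lra].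
        - apply lim0_const.
        - apply lim0_mult; [apply lim0_const | apply lim0_id].
        - apply lim0_mult; [apply lim0_id | apply Rem_lim]. }
      now replace (Chead * 0 + alpha * Tlin + alpha * (alpha - 1) / 2 * Qquad * 0 + 0 * 0)
        with (alpha * Tlin) in Hlim by ring.
Qed.

(* (ii): for alpha < 2 the zero coordinates, of order eps^alpha, dominate *)
Lemma equiv_head :
  Tlin = 0 -> alpha < 2 -> (exists k, (1 <= k <= N1)%nat /\ c k <> 0) ->
  asym_equiv renyi_gap (fun eps => rpow eps alpha / (alpha - 1) * Chead / Spow).
Proof.
  intros HT Ha2 Hhead. pose proof Spow_pos. pose proof (Chead_pos Hhead).
  apply (gap_equiv (fun e => rpow e alpha) Chead).
  - lra.
  - apply lim0_rpow; lra.
  - intros e He. rewrite rpow_pos by lra. apply Rgt_not_eq, Rpower_pos.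
  - intros e He. field. lra.
  - apply (lim0_ext (fun e => Chead + (alpha * (alpha - 1) / 2 * Qquad + Rem e) * rpow e (2 - alpha))).
    + intros e He. rewrite Fpert_expansion, HT, !rpow_pos, Rpower_minus, Rpower_two by lra.
      field. apply Rgt_not_eq, Rpower_pos.
    + assert (Hlim : lim0 (fun e => Chead + (alpha * (alpha - 1) / 2 * Qquad + Rem e) * rpow e (2 - alpha))
                          (Chead + (alpha * (alpha - 1) / 2 * Qquad + 0) * 0)).
      { apply lim0_plus; [apply lim0_const |].
        apply lim0_mult; [apply lim0_plus; [apply lim0_const | apply Rem_lim] |].
        apply lim0_rpow; lra. }
      now rewrite Rmult_0_r, Rplus_0_r in Hlim.
Qed.

(* (iii) and (v): the quadratic term dominates, provided the head term
   Chead eps^alpha is absent or of higher order *)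
Lemma equiv_quadratic :
  Tlin = 0 -> (Chead = 0 \/ 2 < alpha) -> (exists k, (N1 < k <= N)%nat /\ c k <> 0) ->
  asym_equiv renyi_gap (fun eps => alpha * eps ^ 2 / 2 * Qquad / Spow).
Proof.
  intros HT Hhead Htail. pose proof Spow_pos. pose proof (Qquad_pos Htail).
  set (K := alpha * (alpha - 1) / 2 * Qquad).
  assert (HK : 0 < K).
  { assert (0 < alpha * (alpha - 1)) by nra. unfold K. apply Rmult_lt_0_compat; lra. }
  assert (Hhead_small : lim0 (fun e => Chead * rpow e (alpha - 2)) 0).
  { destruct Hhead as [HC|Ha2].
    - rewrite HC. apply (lim0_ext (fun _ => 0)); [intros; ring | apply lim0_const].
    - replace 0 with (Chead * 0) by ring.
      apply lim0_mult; [apply lim0_const | apply lim0_rpow; lra]. }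
  apply (gap_equiv (fun e => e ^ 2) K).
  - lra.
  - exact lim0_sqr.
  - intros e He. apply pow_nonzero. lra.
  - intros e He. unfold K. field. lra.
  - apply (lim0_ext (fun e => Chead * rpow e (alpha - 2) + K + Rem e)).
    + intros e He. rewrite Fpert_expansion, HT, !rpow_pos, Rpower_minus, Rpower_two by lra.
      unfold K. field. lra.
    + assert (Hlim : lim0 (fun e => Chead * rpow e (alpha - 2) + K + Rem e) (0 + K + 0)).
      { apply lim0_plus; [apply lim0_plus |]; auto using lim0_const, Rem_lim. }
      now rewrite Rplus_0_l, Rplus_0_r in Hlim.
Qed.

(* (iv): for alpha = 2 the head and tail squares enter with the same weight *)
Lemma equiv_collision :
  alpha = 2 -> Tlin = 0 -> (exists k, (1 <= k <= N)%nat /\ c k <> 0) ->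
  asym_equiv renyi_gap (fun eps => eps ^ 2 * sum_n_m (fun k => c k ^ 2) 1 N
                                   / sum_n_m (fun k => p k ^ 2) (N1 + 1) N).
Proof.
  intros Ha2 HT Hex. pose proof Spow_pos.
  assert (EC : Chead = sum_n_m (fun k => c k ^ 2) 1 N1).
  { unfold Chead. rewrite Ha2. apply sum_ext. intros k Hk.
    destruct (Req_dec (c k) 0) as [E|E].
    - rewrite E, rpow_nonpos by lra. ring.
    - pose proof (Hc_head k Hk). rewrite rpow_pos by lra. apply Rpower_two. lra. }
  assert (EQ : Qquad = sum_n_m (fun k => c k ^ 2) (N1 + 1) N).
  { unfold Qquad. rewrite Ha2. apply sum_ext. intros k Hk.
    rewrite rpow_pos, Rminus_eq_0, Rpower_O by (apply Hp_tail; lia). ring. }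
  assert (ES : Spow = sum_n_m (fun k => p k ^ 2) (N1 + 1) N).
  { unfold Spow. rewrite Ha2. apply sum_ext. intros k Hk.
    rewrite rpow_pos by (apply Hp_tail; lia). apply Rpower_two, Hp_tail. lia. }
  assert (Etot : sum_n_m (fun k => c k ^ 2) 1 N = Chead + Qquad)
    by (rewrite EC, EQ; apply sum_split; lia).
  assert (HK : 0 < Chead + Qquad).
  { rewrite <- Etot. apply sum_pos; [intros; apply pow2_ge_0 |].
    destruct Hex as [k [Hk Hck]]. exists k. split; [exact Hk | now apply pow2_gt_0]. }
  apply (gap_equiv (fun e => e ^ 2) (Chead + Qquad)).
  - lra.
  - exact lim0_sqr.
  - intros e He. apply pow_nonzero. lra.
  - intros e He. rewrite Etot, <- ES, Ha2. field. lra.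
  - apply (lim0_ext (fun e => Chead + Qquad + Rem e)).
    + intros e He. rewrite Fpert_expansion, HT, rpow_pos, Ha2, Rpower_two by lra. field. lra.
    + assert (Hlim := lim0_plus _ _ _ _ (lim0_const (Chead + Qquad)) Rem_lim).
      now rewrite Rplus_0_r in Hlim.
Qed.

End Perturbation.

Theorem mainTheorem9 (alpha : R) (N N1 : nat) (p c : nat -> R) :
  1 < alpha ->
  (1 <= N)%nat -> (N1 < N)%nat ->
  (forall k, (1 <= k <= N)%nat -> 0 <= p k) ->
  sum_n_m p 1 N = 1 ->
  (forall k, (1 <= k <= N1)%nat -> p k = 0) ->
  (forall k, (N1 < k <= N)%nat -> 0 < p k) ->
  (exists k, (1 <= k <= N)%nat /\ c k <> 0) ->
  (forall k, (1 <= k <= N1)%nat -> 0 <= c k <= 1) ->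
  (forall k, (N1 < k <= N)%nat -> Rabs (c k) <= 1) ->
  sum_n_m c 1 N = 0 ->
  let Ssum := sum_n_m (fun k => rpow (p k) alpha) (N1 + 1)%nat N in
  let Tsum := sum_n_m (fun k => c k * rpow (p k) (alpha - 1)) (N1 + 1)%nat N in
  let D := fun eps => renyi alpha N p - renyi alpha N (pert N1 p c eps) in
  (* (i) *)
  (Tsum <> 0 ->
     asym_equiv D (fun eps => alpha * eps / (alpha - 1) * Tsum / Ssum)) /\
  (* (ii) *)
  (Tsum = 0 -> alpha < 2 -> (1 <= N1)%nat ->
     (exists k, (1 <= k <= N1)%nat /\ c k <> 0) ->
     asym_equiv D (fun eps => rpow eps alpha / (alpha - 1)
                      * sum_n_m (fun k => rpow (c k) alpha) 1 N1 / Ssum)) /\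
  (* (iii) *)
  (Tsum = 0 -> alpha < 2 ->
     (forall k, (1 <= k <= N1)%nat -> c k = 0) ->
     asym_equiv D (fun eps => alpha * eps ^ 2 / 2
         * sum_n_m (fun k => c k ^ 2 * rpow (p k) (alpha - 2)) (N1 + 1)%nat N / Ssum)) /\
  (* (iv) *)
  (Tsum = 0 -> alpha = 2 ->
     asym_equiv D (fun eps => eps ^ 2 * sum_n_m (fun k => c k ^ 2) 1 N
                      / sum_n_m (fun k => p k ^ 2) (N1 + 1)%nat N)) /\
  (* (v) *)
  (Tsum = 0 -> 2 < alpha ->
     asym_equiv D (fun eps => alpha * eps ^ 2 / 2
         * sum_n_m (fun k => c k ^ 2 * rpow (p k) (alpha - 2)) (N1 + 1)%nat N / Ssum)).
Proof.
  intros Ha _ HN1N _ _ Hp_head Hp_tail Hex Hc _ Hcsum Ssum Tsum D.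
  assert (Hc_head : forall k, (1 <= k <= N1)%nat -> 0 <= c k) by (intros k Hk; apply Hc, Hk).
  pose proof (tail_perturbed N N1 c HN1N Hc_head Hex Hcsum) as Htail.
  split; [|split; [|split; [|split]]].
  - intros HT. now apply equiv_linear.
  - intros HT Ha2 _ Hhead. now apply equiv_head.
  - intros HT _ Hc_zero. apply equiv_quadratic; auto. left.
    apply sum_zero. intros k Hk. rewrite Hc_zero by exact Hk. apply rpow_nonpos. lra.
  - intros HT Ha2. now apply equiv_collision.
  - intros HT Ha2. apply equiv_quadratic; auto.
Qed.
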